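(* Let $f:(L_1,[\cdot,\cdot]_1,\alpha_1)\to(L_2,[\cdot,\cdot]_2,\alpha_2)$ be a morphism of Hom-Lie algebras over a field $F$. If $\mu_B$ is a fuzzy Hom-Lie subalgebra (respectively, fuzzy Hom-Lie ideal) of $L_2$, then the fuzzy set $\mu_{f^{-1}(B)}$ on $L_1$ defined by $\mu_{f^{-1}(B)}(x)=\mu_B(f(x))$ is a fuzzy Hom-Lie subalgebra (respectively, fuzzy Hom-Lie ideal) of $L_1$.
   Context: A Hom-Lie algebra over $F$ is a triple $(L,[\cdot,\cdot],\alpha)$ with $L$ an $F$-vector space, $\alpha:L\to L$ linear and $[\cdot,\cdot]$ bilinear, skew-symmetric, satisfying $[\alpha(x),[y,z]]+[\alpha(y),[z,x]]+[\alpha(z),[x,y]]=0$. A morphism of Hom-Lie algebras is a linear map $f$ with $f([x,y]_1)=[f(x),f(y)]_2$ and $f\circ\alpha_1=\alpha_2\circ f$. A fuzzy subset $\mu:L\to[0,1]$ is a fuzzy Hom-Lie subalgebra if for all $x,y\in L$, $c\in F$: $\mu(x+y)\ge\min\{\mu(x),\mu(y)\}$, $\mu(cx)\ge\mu(x)$, $\mu([x,y])\ge\min\{\mu(x),\mu(y)\}$, $\mu(\alpha(x))\ge\mu(x)$; it is a fuzzy Hom-Lie ideal if the third condition is replaced by $\mu([x,y])\ge\max\{\mu(x),\mu(y)\}$. *)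

From mathcomp Require Import all_boot all_algebra.
From Stdlib Require Import Reals.
Set Implicit Arguments. Unset Strict Implicit. Unset Printing Implicit Defensive.
Import GRing.Theory.
Local Open Scope ring_scope.

Definition is_HomLie (F : fieldType) (L : lmodType F)
  (br : L -> L -> L) (al : L -> L) : Prop :=
  [/\ (forall a : F, forall x y z, br (a *: x + y) z = a *: br x z + br y z),
      (forall a : F, forall x y z, br x (a *: y + z) = a *: br x y + br x z),
      (forall x y, br x y = - br y x),
      (forall a : F, forall x y, al (a *: x + y) = a *: al x + al y)
    & (forall x y z, br (al x) (br y z) + br (al y) (br z x)
                     + br (al z) (br x y) = 0)].

Definition is_HomLie_morphism (F : fieldType) (L1 L2 : lmodType F)
  (br1 : L1 -> L1 -> L1) (al1 : L1 -> L1)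
  (br2 : L2 -> L2 -> L2) (al2 : L2 -> L2) (f : L1 -> L2) : Prop :=
  [/\ (forall a : F, forall x y, f (a *: x + y) = a *: f x + f y),
      (forall x y, f (br1 x y) = br2 (f x) (f y))
    & (forall x, f (al1 x) = al2 (f x))].

Definition is_fuzzy_set (L : Type) (mu : L -> R) : Prop :=
  forall x, Rle (IZR 0) (mu x) /\ Rle (mu x) (IZR 1).

Definition fuzzy_HomLie_subalgebra (F : fieldType) (L : lmodType F)
  (br : L -> L -> L) (al : L -> L) (mu : L -> R) : Prop :=
  [/\ is_fuzzy_set mu,
      (forall x y, Rle (Rmin (mu x) (mu y)) (mu (x + y))),
      (forall (c : F) x, Rle (mu x) (mu (c *: x))),
      (forall x y, Rle (Rmin (mu x) (mu y)) (mu (br x y)))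
    & (forall x, Rle (mu x) (mu (al x)))].

Definition fuzzy_HomLie_ideal (F : fieldType) (L : lmodType F)
  (br : L -> L -> L) (al : L -> L) (mu : L -> R) : Prop :=
  [/\ is_fuzzy_set mu,
      (forall x y, Rle (Rmin (mu x) (mu y)) (mu (x + y))),
      (forall (c : F) x, Rle (mu x) (mu (c *: x))),
      (forall x y, Rle (Rmax (mu x) (mu y)) (mu (br x y)))
    & (forall x, Rle (mu x) (mu (al x)))].

From mathcomp Require Import all_boot all_algebra.
From Stdlib Require Import Reals.
Import GRing.Theory.
Local Open Scope ring_scope.

(* Pulling back along f turns each closure condition on mu at (f x, f y) into
   the same condition on mu \o f at (x, y), since f commutes with +, *:, the
   bracket and the twist; only the morphism axioms are used, not the Hom-Lie
   identities of L1 and L2. *)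

Section LinearCombinationMorphism.

Variables (F : fieldType) (L1 L2 : lmodType F) (f : L1 -> L2).
Hypothesis f_comb : forall (a : F) x y, f (a *: x + y) = a *: f x + f y.

Lemma comb_morphD x y : f (x + y) = f x + f y.
Proof. by have := f_comb 1 x y; rewrite !scale1r. Qed.

Lemma comb_morph0 : f 0 = 0.
Proof. by apply: (addrI (f 0)); rewrite -comb_morphD !addr0. Qed.

Lemma comb_morphZ (c : F) x : f (c *: x) = c *: f x.
Proof. by have := f_comb c x 0; rewrite !addr0 comb_morph0 addr0. Qed.

End LinearCombinationMorphism.

Lemma is_fuzzy_set_comp (T U : Type) (g : T -> U) (mu : U -> R) :
  is_fuzzy_set mu -> is_fuzzy_set (fun x => mu (g x)).
Proof. by move=> mu_fuzzy x; apply: mu_fuzzy. Qed.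

Section FuzzyPreimage.

Variables (F : fieldType) (L1 L2 : lmodType F).
Variables (br1 : L1 -> L1 -> L1) (al1 : L1 -> L1).
Variables (br2 : L2 -> L2 -> L2) (al2 : L2 -> L2) (f : L1 -> L2).
Hypothesis f_morph : is_HomLie_morphism br1 al1 br2 al2 f.

Lemma fuzzy_HomLie_subalgebra_preimage (mu : L2 -> R) :
  fuzzy_HomLie_subalgebra br2 al2 mu ->
  fuzzy_HomLie_subalgebra br1 al1 (fun x => mu (f x)).
Proof.
case: f_morph => f_comb f_br f_al [mu_fuzzy muD muZ mu_br mu_al]; split.
- exact: is_fuzzy_set_comp.
- by move=> x y; rewrite comb_morphD.
- by move=> c x; rewrite comb_morphZ.
- by move=> x y; rewrite f_br.
- by move=> x; rewrite f_al.
Qed.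

Lemma fuzzy_HomLie_ideal_preimage (mu : L2 -> R) :
  fuzzy_HomLie_ideal br2 al2 mu ->
  fuzzy_HomLie_ideal br1 al1 (fun x => mu (f x)).
Proof.
case: f_morph => f_comb f_br f_al [mu_fuzzy muD muZ mu_br mu_al]; split.
- exact: is_fuzzy_set_comp.
- by move=> x y; rewrite comb_morphD.
- by move=> c x; rewrite comb_morphZ.
- by move=> x y; rewrite f_br.
- by move=> x; rewrite f_al.
Qed.

End FuzzyPreimage.

Theorem theorem6p1 (F : fieldType) (L1 L2 : lmodType F)
  (br1 : L1 -> L1 -> L1) (al1 : L1 -> L1)
  (br2 : L2 -> L2 -> L2) (al2 : L2 -> L2) (f : L1 -> L2) (muB : L2 -> R) :
  is_HomLie br1 al1 -> is_HomLie br2 al2 ->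
  is_HomLie_morphism br1 al1 br2 al2 f ->
  (fuzzy_HomLie_subalgebra br2 al2 muB ->
     fuzzy_HomLie_subalgebra br1 al1 (fun x => muB (f x))) /\
  (fuzzy_HomLie_ideal br2 al2 muB ->
     fuzzy_HomLie_ideal br1 al1 (fun x => muB (f x))).
Proof.
move=> _ _ f_morph; split.
- exact: fuzzy_HomLie_subalgebra_preimage.
- exact: fuzzy_HomLie_ideal_preimage.
Qed.
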